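(* Let $x^0=0,x^1,x^2,\dots$ be the (random) states chosen by DRBG($N$) in the discrete setting described in the context, let $SC^t=\sum_{i=1}^t\|x^i-x^{i-1}\|$, and let $\phi^t=\frac{1}{2\theta}\big(w^t(x_1)+w^t(x_m)\big)-\frac{\|x_m-x_1\|}{2}$. Then for every time step $t$, $\mathbb{E}[SC^t]\le\phi^t$.
   Context: Discrete setting: a finite set of states $M=\{x_1,\dots,x_m\}\subset\mathbb{R}^+$ with $x_1=0$ and equal spacing $x_{k+1}-x_k=\delta$; a norm $\|\cdot\|$ on $\mathbb{R}$; $\theta\ge1$ and $N(\cdot)=\theta\|\cdot\|$; cost functions $c^t:M\to\mathbb{R}^+$ that are restrictions to $M$ of convex functions. Work function: $w^0(x)=N(x)$ and $w^t(x)=\min_{y\in M}\{w^{t-1}(y)+c^t(y)+N(x-y)\}$ for $x\in M$. Algorithm DRBG($N$): draw a single random number $r$ uniformly from $(-1,1)$; at each time step $t$ go to the state $x^t\in M$ minimizing $Y^t(x)=w^{t-1}(x)+rN(x)$. The expectation is over $r$. *)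

From HB Require Import structures.
From mathcomp Require Import all_boot all_order all_algebra.
From mathcomp Require Import all_classical all_reals all_analysis.
Set Implicit Arguments. Unset Strict Implicit. Unset Printing Implicit Defensive.
Import Order.TTheory GRing.Theory Num.Theory.
Local Open Scope ring_scope.

Section DRBG.
Variable R : realType.

Definition is_norm (nrm : R -> R) : Prop :=
  [/\ (forall x, nrm x = 0 -> x = 0),
      (forall a x, nrm (a * x) = `|a| * nrm x) &
      (forall x y, nrm (x + y) <= nrm x + nrm y)].

Definition convex_fun (g : R -> R) : Prop :=
  forall x y l, 0 <= l <= 1 -> g (l * x + (1 - l) * y) <= l * g x + (1 - l) * g y.

(* The m = n.+1 states: x_{k+1} = k * delta, k : 'I_n.+1, so x_1 = 0. *)
Definition state (delta : R) (n : nat) (k : 'I_n.+1) : R := k%:R * delta.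

Definition minI (n : nat) (F : 'I_n.+1 -> R) : R :=
  \big[Num.min/F ord0]_(i < n.+1) F i.

(* Work function w^t, with N = theta * nrm and costs c t : 'I_n.+1 -> R. *)
Fixpoint work (nrm : R -> R) (theta delta : R) (n : nat)
    (c : nat -> 'I_n.+1 -> R) (t : nat) : 'I_n.+1 -> R :=
  match t with
  | 0 => fun x => theta * nrm (state delta x)
  | t'.+1 => fun x => minI (fun y => work nrm theta delta c t' y + c t y
                                     + theta * nrm (state delta x - state delta y))
  end.

(* State x^t chosen by DRBG(N) with random number r (ties broken by argmin). *)
Definition drbg (nrm : R -> R) (theta delta : R) (n : nat)
    (c : nat -> 'I_n.+1 -> R) (r : R) (t : nat) : 'I_n.+1 :=
  match t with
  | 0 => ord0
  | t'.+1 => [arg min_(i < ord0)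
                (work nrm theta delta c t' i + r * (theta * nrm (state delta i)))]%O
  end.

Definition SC (nrm : R -> R) (theta delta : R) (n : nat)
    (c : nat -> 'I_n.+1 -> R) (r : R) (t : nat) : R :=
  \sum_(1 <= i < t.+1)
     nrm (state delta (drbg nrm theta delta c r i)
          - state delta (drbg nrm theta delta c r i.-1)).

Definition phi (nrm : R -> R) (theta delta : R) (n : nat)
    (c : nat -> 'I_n.+1 -> R) (t : nat) : R :=
  (work nrm theta delta c t ord0 + work nrm theta delta c t ord_max) / (2 * theta)
  - nrm (@state delta n ord_max - @state delta n ord0) / 2.

(* Expectation over r uniform on (-1,1). *)
Definition unif_dom : set R := `]-1, 1[%classic.

Definition expected_SC (nrm : R -> R) (theta delta : R) (n : nat)
    (c : nat -> 'I_n.+1 -> R) (t : nat) : \bar R :=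
  ((2^-1)%:E * \int[@lebesgue_measure R]_(r in unif_dom)
                 (SC nrm theta delta c r t)%:E)%E.

End DRBG.

(* Write b = N(delta) for the cost of one grid step.  Each work function is an infimal
   convolution of the convex w^{t-1} + c^t with b|.|, hence discretely convex and
   b-Lipschitz; DRBG then sits where the slopes of w^{t-1} cross the level -r b.  So two
   consecutive states are at most as far apart as the number of grid steps k at which
   -r b lies between the k-th slopes of w^{t-1} and w^t, an event of probability
   |Delta slope_k| / (2b) for uniform r.  Finally w^t - w^{t-1} is nonnegative with a
   single valley (it follows the monotonicity of c^t), so the total slope change is at
   most the increase of w(x_1) + w(x_m), which telescopes into phi^t. *)

From HB Require Import structures.
From mathcomp Require Import all_boot all_order all_algebra.
From mathcomp Require Import all_classical all_reals all_analysis.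
From mathcomp Require Import ring lra measurable_realfun.
Import Order.TTheory GRing.Theory Num.Theory.
Set Implicit Arguments. Unset Strict Implicit. Unset Printing Implicit Defensive.
Local Open Scope ring_scope.

Section DiscreteConvexity.
Variables (R : realFieldType) (n : nat).

Definition natdist (i j : nat) : R := `|i%:R - j%:R|.

Lemma natdistC i j : natdist i j = natdist j i.
Proof. exact: distrC. Qed.

Lemma natdist_subn i j : (j <= i)%N -> natdist i j = i%:R - j%:R.
Proof. by move=> ji; rewrite /natdist ger0_norm // subr_ge0 ler_nat. Qed.

Definition slope (f : nat -> R) k := f k.+1 - f k.

Definition dconvex (f : nat -> R) :=
  forall k, (k.+2 <= n)%N -> slope f k <= slope f k.+1.

Definition dlipschitz (b : R) (f : nat -> R) :=
  forall i j, (i <= n)%N -> (j <= n)%N -> f i <= f j + b * natdist i j.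

Lemma slope_le f k j : dconvex f -> (k <= j)%N -> (j < n)%N ->
  slope f k <= slope f j.
Proof.
move=> cf; elim: j => [|j IH] kj jn; first by move: kj; rewrite leqn0 => /eqP ->.
case: (ltngtP k j.+1) kj => // [kj|->] _ //.
exact: le_trans (IH kj (ltnW jn)) (cf j jn).
Qed.

Lemma dconvexD f g : dconvex f -> dconvex g -> dconvex (fun j => f j + g j).
Proof. by move=> cf cg k kn; have := cf k kn; have := cg k kn; rewrite /slope; lra. Qed.

Lemma dlipschitz_slope b f k : dlipschitz b f -> (k < n)%N -> -b <= slope f k <= b.
Proof.
move=> lf kn; have := lf k k.+1 (ltnW kn) kn; have := lf k.+1 k kn (ltnW kn).
rewrite natdist_subn // natdistC natdist_subn // /slope -natr1.
by move=> *; apply/andP; split; lra.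
Qed.

Section InfimalConvolution.
Variable b : R.
Hypothesis b_ge0 : 0 <= b.

Definition is_infconv (h G : nat -> R) :=
  (forall i j, (i <= n)%N -> (j <= n)%N -> G i <= h j + b * natdist i j) /\
  (forall i, (i <= n)%N -> exists2 j, (j <= n)%N & G i = h j + b * natdist i j).

Lemma infconv_dlipschitz h G : is_infconv h G -> dlipschitz b G.
Proof.
move=> [G_le G_eq] i j ilt jlt; have [j' j'lt ->] := G_eq j jlt.
apply: le_trans (G_le i j' ilt j'lt) _.
have := ler_wpM2l b_ge0 (ler_distD (j%:R : R) i%:R j'%:R).
rewrite mulrDr /natdist; lra.
Qed.

Lemma infconv_slope h G k : dconvex h -> is_infconv h G -> (k < n)%N ->
  Num.min (slope h k) b <= slope G k <= Num.max (slope h k) (-b).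
Proof.
move=> ch [G_le G_eq] kn; rewrite /slope; apply/andP; split.
- have [j jn ->] := G_eq k.+1 kn; rewrite ge_min.
  case: (leqP j k) => jk.
    have := G_le k j (ltnW kn) jn.
    rewrite !natdist_subn ?(leq_trans jk) // -natr1 => ?; apply/orP; right; lra.
  case: j jk jn => // j jk jn.
  have := G_le k j (ltnW kn) (ltnW jn); have := slope_le ch (jk : (k <= j)%N) jn.
  rewrite [natdist k.+1 _]natdistC [natdist k _]natdistC !natdist_subn // /slope -!natr1.
  by move=> *; apply/orP; left; lra.
- have [j jn Gj] := G_eq k (ltnW kn).
  rewrite le_max; case: (leqP j k) => jk.
    have := G_le k.+1 j.+1 kn (leq_ltn_trans jk kn); have := slope_le ch jk kn.
    rewrite Gj !natdist_subn ?ltnS // /slope -!natr1.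
    by move=> *; apply/orP; left; lra.
  have := G_le k.+1 j kn jn; rewrite Gj !(natdistC _ j) !natdist_subn ?(ltnW jk) //.
  by rewrite -!natr1 => ?; apply/orP; right; lra.
Qed.

Lemma infconv_dconvex h G : dconvex h -> is_infconv h G -> dconvex G.
Proof.
move=> ch hG k kn; have k1 : (k < n)%N by apply: leq_trans kn.
have /andP[l1 l2] := dlipschitz_slope (infconv_dlipschitz hG) k1.
have /andP[l3 l4] := dlipschitz_slope (infconv_dlipschitz hG) kn.
have /andP[m1 m2] := infconv_slope ch hG k1.
have /andP[m3 m4] := infconv_slope ch hG kn.
have := ch k kn; move: m1 m2 m3 m4; rewrite !ge_min !le_max.
by move=> /orP[] ? /orP[] ? /orP[] ? /orP[] ?; lra.
Qed.

Lemma infconv_ge W c G : dlipschitz b W -> (forall j, (j <= n)%N -> 0 <= c j) ->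
  is_infconv (fun j => W j + c j) G -> forall i, (i <= n)%N -> W i <= G i.
Proof.
move=> lW c_ge0 [_ G_eq] i ilt; have [j jlt ->] := G_eq i ilt.
by have := lW i j ilt jlt; have := c_ge0 j jlt; lra.
Qed.

Lemma infconv_slope_shift W c G k : dconvex (fun j => W j + c j) ->
  is_infconv (fun j => W j + c j) G -> (k < n)%N -> -b <= slope W k <= b ->
  (0 <= slope c k -> slope W k <= slope G k) /\
  (slope c k <= 0 -> slope G k <= slope W k).
Proof.
move=> ch hG kn /andP[w1 w2]; have /andP[] := infconv_slope ch hG kn.
have -> : slope (fun j => W j + c j) k = slope W k + slope c k by rewrite /slope; lra.
rewrite ge_min le_max => /orP[] m1 /orP[] m2; split => ?; lra.
Qed.

End InfimalConvolution.

(* [e] has a single valley, where the slopes of [c] change sign, so its total variation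
   is [e 0 + e n] minus twice its minimum. *)
Lemma sum_abs_slope_le e c : dconvex c -> (forall i, (i <= n)%N -> 0 <= e i) ->
  (forall k, (k < n)%N -> 0 <= slope c k -> 0 <= slope e k) ->
  (forall k, (k < n)%N -> slope c k <= 0 -> slope e k <= 0) ->
  \sum_(0 <= k < n) `|slope e k| <= e 0%N + e n.
Proof.
move=> cc e_ge0 e_up e_down.
have ex : exists k, (n <= k)%N || (0 <= slope c k) by exists n; rewrite leqnn.
case: (ex_minnP ex) => m Pm m_min.
have mn : (m <= n)%N by apply: m_min; rewrite leqnn.
rewrite (@big_cat_nat _ _ _ m 0 n _ _ (leq0n m) mn) /=.
have -> : \sum_(0 <= k < m) `|slope e k| = \sum_(0 <= k < m) - (e k.+1 - e k).
  apply: eq_big_nat => k /andP[_ km].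
  have : ~~ ((n <= k)%N || (0 <= slope c k)) by apply/negP => /m_min; rewrite leqNgt km.
  rewrite negb_or -ltNge => /andP[_ ?]; rewrite ler0_norm //.
  by apply: e_down; [exact: leq_trans km mn | exact: ltW].
have -> : \sum_(m <= k < n) `|slope e k| = \sum_(m <= k < n) (e k.+1 - e k).
  apply: eq_big_nat => k /andP[mk kn].
  have cm : 0 <= slope c m.
    by case/orP: Pm => // nm; have := leq_ltn_trans (leq_trans nm mk) kn; rewrite ltnn.
  by rewrite ger0_norm // e_up // (le_trans cm (slope_le cc mk kn)).
by rewrite sumrN !telescope_sumr //; have := e_ge0 m mn; lra.
Qed.

Definition is_cut (d : nat -> R) v x :=
  (forall k, (k < x)%N -> d k <= v) /\ (forall k, (x <= k)%N -> (k < n)%N -> v <= d k).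

Lemma cut_of_argmin W rho x : dconvex W -> (x <= n)%N ->
  (forall j, (j <= n)%N -> W x + rho * x%:R <= W j + rho * j%:R) ->
  is_cut (slope W) (- rho) x.
Proof.
move=> cW xn x_min; split.
- move=> k kx; case: x kx xn x_min => // x kx xn x_min.
  have := x_min x (ltnW xn); have := slope_le cW (kx : (k <= x)%N) xn.
  by rewrite /slope -natr1 mulrDr mulr1; lra.
- move=> k xk kn; have xn' : (x < n)%N by apply: leq_ltn_trans xk kn.
  have := x_min x.+1 xn'; have := slope_le cW xk kn.
  by rewrite /slope -natr1 mulrDr mulr1; lra.
Qed.

Definition straddles (d d' : nat -> R) v k :=
  v \in `[Num.min (d k) (d' k), Num.max (d k) (d' k)].

(* Every index between two cuts at the same level [v] is one where [v] separates
   [d] and [d']. *)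
Lemma natdist_cut_le d d' v x x' : (x <= n)%N -> (x' <= n)%N ->
  is_cut d v x -> is_cut d' v x' ->
  natdist x x' <= \sum_(0 <= k < n) (straddles d d' v k)%:R.
Proof.
wlog xx' : d d' x x' / (x <= x')%N.
  move=> hw xn x'n cx cx'; case: (leqP x x') => [|/ltnW] h; first exact: hw.
  rewrite natdistC (eq_bigr (fun k => (straddles d' d v k)%:R)); first exact: hw.
  by move=> k _; rewrite /straddles minC maxC.
move=> xn x'n [_ d_ge] [d'_le _].
rewrite natdistC natdist_subn //.
rewrite (@big_cat_nat _ _ _ x 0 n _ _ (leq0n x) (leq_trans xx' x'n)) /=.
rewrite (@big_cat_nat _ _ _ x' x n _ _ xx' x'n) /=.
have -> : \sum_(x <= k < x') (straddles d d' v k)%:R = \sum_(x <= k < x') (1 : R).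
  apply: eq_big_nat => k /andP[xk kx']; have kn := leq_trans kx' x'n.
  by rewrite /straddles in_itv /= ge_min le_max d'_le // d_ge ?orbT.
by rewrite sumr_const_nat -natrB // ler_wpDl ?ler_wpDr ?sumr_ge0.
Qed.

End DiscreteConvexity.

Arguments natdist {R}.

Section NonnegIntegral.
Local Open Scope ereal_scope.
Local Open Scope classical_set_scope.
Context d (T : measurableType d) (R : realType).
Variables (mu : {measure set T -> \bar R}) (D : set T).

(* Monotonicity of the integral needs no measurability of the smaller function: the
   integral of a nonnegative function is a supremum over simple functions below it. *)
Lemma ge0_le_integral_nonmeasurable (f g : T -> \bar R) :
  (forall x, D x -> 0 <= f x) -> (forall x, D x -> f x <= g x) ->
  \int[mu]_(x in D) f x <= \int[mu]_(x in D) g x.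
Proof.
move=> f_ge0 fg.
have g_ge0 x : D x -> 0 <= g x by move=> Dx; exact: le_trans (f_ge0 x Dx) (fg x Dx).
rewrite !ge0_integralE //.
apply: le_ereal_sup => _ [h h_le <-]; exists h => //= x.
by apply: le_trans (h_le x) _; apply: lee_restrict.
Qed.

Lemma integral_scaled_sum_indic (I J : Type) (s1 : seq I) (s2 : seq J)
    (A : I -> J -> set T) (k : R) :
  measurable D -> (forall i j, measurable (A i j)) -> (0 <= k)%R ->
  \int[mu]_(x in D) (k * \sum_(i <- s1) \sum_(j <- s2) \1_(A i j) x)%:E =
  k%:E * \sum_(i <- s1) \sum_(j <- s2) mu (A i j `&` D).
Proof.
move=> mD mA k_ge0; under eq_integral do rewrite EFinM -sumEFin.
under eq_integral do under eq_bigr do rewrite -sumEFin.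
rewrite ge0_integralZl_EFin //; last first.
- by apply: emeasurable_sum => i; apply: emeasurable_sum => j;
    apply/measurable_EFinP; exact: measurable_indic.
- by move=> x _; apply: sume_ge0 => i _; apply: sume_ge0 => j _; rewrite lee_fin.
congr (_ * _); rewrite ge0_integral_sum //; last first.
- by move=> i x _; apply: sume_ge0 => j _; rewrite lee_fin.
- by move=> i; apply: emeasurable_sum => j; apply/measurable_EFinP; exact: measurable_indic.
apply: eq_bigr => i _; rewrite ge0_integral_sum //; last first.
  by move=> j; apply/measurable_EFinP; exact: measurable_indic.
by apply: eq_bigr => j _; rewrite integral_indic.
Qed.

End NonnegIntegral.

Section MinI.
Variables (R : realType) (m : nat) (F : 'I_m.+1 -> R).

Lemma minI_le j : minI F <= F j.
Proof. by rewrite /minI (bigD1 j) //= ge_min lexx. Qed.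

Lemma minI_exists : exists j, minI F = F j.
Proof.
rewrite /minI; apply: (big_ind (fun y => exists j, y = F j)); first by exists ord0.
  by move=> _ _ [i ->] [j ->]; case: leP => _; [exists i | exists j].
by move=> i _; exists i.
Qed.

End MinI.

Section DRBG.
Variables (R : realType) (nrm : R -> R) (theta delta : R) (n : nat)
    (c : nat -> 'I_n.+1 -> R).
Hypotheses (Hnrm : is_norm nrm) (Htheta : 1 <= theta) (Hdelta : 0 < delta)
    (Hc_nonneg : forall t k, 0 <= c t k)
    (Hc_convex : forall t, exists g : R -> R,
        convex_fun g /\ forall k, c t k = g (state delta k)).

Let a := nrm 1.
Let b := theta * a * delta.
(* [b] is N(delta), the price of one grid step. *)

Lemma nrmE x : nrm x = a * `|x|.
Proof. by case: Hnrm => _ nrmZ _; rewrite -[x]mulr1 nrmZ mulr1 mulrC. Qed.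

Lemma nrm1_gt0 : 0 < a.
Proof.
case: Hnrm => nrm_eq0 nrmZ nrmD.
have nrm0 : nrm 0 = 0 by have := nrmZ 0 0; rewrite mul0r normr0 mul0r.
have nrmN1 : nrm (-1) = a by have := nrmZ (-1) 1; rewrite mulr1 normrN normr1 mul1r.
rewrite lt_def; apply/andP; split.
  by apply/eqP => a0; have /eqP := nrm_eq0 1 a0; rewrite oner_eq0.
by have := nrmD 1 (-1); rewrite subrr nrm0 nrmN1 -/a; lra.
Qed.

Lemma b_gt0 : 0 < b.
Proof. by rewrite /b !mulr_gt0 ?nrm1_gt0 //; have := Htheta; lra. Qed.

Lemma nrm_state (i j : 'I_n.+1) :
  nrm (state delta i - state delta j) = a * delta * natdist i j.
Proof. by rewrite nrmE /state -mulrBl normrM (gtr0_norm Hdelta) /natdist; lra. Qed.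

Lemma nrm_state0 (i : 'I_n.+1) : nrm (state delta i) = a * delta * i%:R.
Proof. by have := nrm_state i ord0; rewrite /state /natdist /= mul0r !subr0 normr_nat. Qed.

(* Indexed by nat through [inord], which is junk beyond [n]: every use is guarded
   by [k <= n]. *)
Definition wfun s k := work nrm theta delta c s (inord k).
Definition cost s k := c s (inord k).

Lemma wfun0 k : (k <= n)%N -> wfun 0 k = b * k%:R.
Proof. by move=> kn; rewrite /wfun /= nrm_state0 inordK // /b; ring. Qed.

Lemma wfun_infconv s : is_infconv n b (fun j => wfun s j + cost s.+1 j) (wfun s.+1).
Proof.
pose F i y := work nrm theta delta c s y + c s.+1 y
              + theta * nrm (state delta (@inord n i) - state delta y).
have F_nat i j : (i <= n)%N -> (j <= n)%N ->
    F i (inord j) = wfun s j + cost s.+1 j + b * natdist i j.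
  by move=> ilt jlt; rewrite /F /wfun /cost nrm_state !inordK // /b; ring.
split => [i j ilt jlt | i ilt]; first by rewrite -F_nat //; exact: minI_le.
have [j Fj] := minI_exists (F i); have jn : (j <= n)%N by rewrite -ltnS.
by exists j; rewrite // -F_nat // inord_val -Fj.
Qed.

Lemma cost_dconvex s : dconvex n (cost s).
Proof.
move=> k k2; have [g [cg cE]] := Hc_convex s.
have k1 := ltnW k2; have k0 := ltnW k1.
rewrite /slope /cost !cE /state !inordK //.
have := cg (k%:R * delta) (k.+2%:R * delta) (2^-1) ltac:(apply/andP; split; lra).
have -> : 2^-1 * (k%:R * delta) + (1 - 2^-1) * (k.+2%:R * delta) = k.+1%:R * delta.
  by rewrite -!natr1; field.
have -> : 1 - 2^-1 = 2^-1 :> R by field.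
lra.
Qed.

Lemma wfun_dconvex_dlipschitz s : dconvex n (wfun s) /\ dlipschitz n b (wfun s).
Proof.
elim: s => [|s [cW lW]].
  split => [k kn | i j ilt jlt].
    by have k1 := ltnW kn; rewrite /slope !wfun0 ?(ltnW k1) // -!natr1; lra.
  rewrite !wfun0 //.
  by have := ler_wpM2l (ltW b_gt0) (ler_norm (i%:R - j%:R : R)); rewrite /natdist; lra.
have hG := wfun_infconv s; have b_ge0 := ltW b_gt0.
split; last exact: infconv_dlipschitz hG.
exact: infconv_dconvex (dconvexD cW (cost_dconvex _)) hG.
Qed.

Lemma wfun_le_succ s i : (i <= n)%N -> wfun s i <= wfun s.+1 i.
Proof.
apply: (infconv_ge (wfun_dconvex_dlipschitz s).2 _ (wfun_infconv s)) => j _.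
exact: Hc_nonneg.
Qed.

Definition work_ends s := wfun s 0 + wfun s n.

Definition slope_change s k := `|slope (wfun s.+1) k - slope (wfun s) k|.

Lemma sum_abs_slope_wfunS s :
  \sum_(0 <= k < n) slope_change s k <= work_ends s.+1 - work_ends s.
Proof.
have [cW lW] := wfun_dconvex_dlipschitz s.
have shift := infconv_slope_shift (dconvexD cW (cost_dconvex s.+1)) (wfun_infconv s).
have -> : work_ends s.+1 - work_ends s =
    (wfun s.+1 0%N - wfun s 0%N) + (wfun s.+1 n - wfun s n).
  by rewrite /work_ends; lra.
have slopeB k :
    slope (wfun s.+1) k - slope (wfun s) k = slope (fun j => wfun s.+1 j - wfun s j) k.
  by rewrite /slope; lra.
rewrite /slope_change; under eq_bigr do rewrite slopeB.
apply: (sum_abs_slope_le (cost_dconvex s.+1)).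
- by move=> i ilt; have := wfun_le_succ s ilt; lra.
- move=> k kn /((shift k kn (dlipschitz_slope lW kn)).1); rewrite /slope; lra.
- move=> k kn /((shift k kn (dlipschitz_slope lW kn)).2); rewrite /slope; lra.
Qed.

Lemma drbg_cut r s :
  is_cut n (slope (wfun s)) (- (r * b)) (drbg nrm theta delta c r s.+1).
Proof.
rewrite /drbg; case: arg_minP => // x _ x_min.
apply: cut_of_argmin (wfun_dconvex_dlipschitz s).1 _ _; first by rewrite -ltnS.
move=> j jn; have := x_min (inord j) isT.
by rewrite !nrm_state0 /wfun inord_val inordK // /b; lra.
Qed.

Lemma drbg1 r : -1 < r -> drbg nrm theta delta c r 1 = ord0.
Proof.
move=> r_gt; apply/val_inj/eqP; rewrite /= -leqn0 leqNgt; apply/negP => x_gt0.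
have x_le : (drbg nrm theta delta c r 1 <= n)%N by rewrite -ltnS.
have := (drbg_cut r 0).1 0%N x_gt0; rewrite /slope !wfun0 ?(leq_trans x_gt0) //.
by have := b_gt0; nra.
Qed.

Definition switch_itv s k : interval R :=
  `[- Num.max (slope (wfun s.+1) k) (slope (wfun s) k) / b,
    - Num.min (slope (wfun s.+1) k) (slope (wfun s) k) / b].

Lemma straddles_indic s k r :
  (straddles (slope (wfun s.+1)) (slope (wfun s)) (- (r * b)) k)%:R
  = \1_[set` switch_itv s k] r :> R.
Proof.
have b_gt := b_gt0.
rewrite indicE /straddles mem_setE !in_itv /= ler_pdivrMr // ler_pdivlMr //.
by congr ((_ : bool)%:R); apply/idP/idP => /andP[? ?]; apply/andP; split; lra.
Qed.

Lemma SC_le_switch_indic r t : -1 < r ->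
  SC nrm theta delta c r t <=
  a * delta * \sum_(0 <= s < t.-1) \sum_(0 <= k < n) \1_[set` switch_itv s k] r.
Proof.
move=> r_gt; rewrite /SC; case: t => [|t]; first by rewrite !big_geq // mulr0.
rewrite big_ltn // drbg1 //= nrm_state /natdist subrr normr0 mulr0 add0r.
rewrite (big_addn 0 t.+2 2) subSS subSS subn0 mulr_sumr; apply: ler_sum => s _.
rewrite addn2 /= nrm_state; apply: ler_wpM2l; first by rewrite mulr_ge0 ?ltW ?nrm1_gt0.
under eq_bigr do rewrite -straddles_indic.
by apply: natdist_cut_le (drbg_cut r s.+1) (drbg_cut r s); rewrite -ltnS.
Qed.

Lemma switch_itv_measure s k :
  lebesgue_measure [set` switch_itv s k] =
  (slope_change s k / b)%:E.
Proof.
have b_gt := b_gt0; rewrite /slope_change lebesgue_measure_itv /= lte_fin.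
have maxBmin (x y : R) : Num.max x y - Num.min x y = `|x - y|.
  case: (leP x y) => xy; first by rewrite ler0_norm ?opprB ?subr_le0.
  by rewrite gtr0_norm ?subr_gt0.
case: ltP => [_|]; first by rewrite -maxBmin; congr (_%:E); field; rewrite gt_eqF.
rewrite ler_pM2r ?invr_gt0 // lerN2 => max_le_min.
have : `|slope (wfun s.+1) k - slope (wfun s) k| <= 0 by rewrite -maxBmin subr_le0.
by rewrite normr_le0 => /eqP ->; rewrite normr0 mul0r.
Qed.

Lemma phiE t : phi nrm theta delta c t = work_ends t / (2 * theta) - a * delta * n%:R / 2.
Proof.
rewrite /phi /work_ends /wfun nrm_state /natdist.
have -> : (inord 0 : 'I_n.+1) = ord0 by apply: val_inj; rewrite /= inordK.
have -> : (inord n : 'I_n.+1) = ord_max by apply: val_inj; rewrite /= inordK.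
by rewrite /= subr0 normr_nat.
Qed.

Lemma sum_abs_slope_wfun_le_ends t :
  \sum_(0 <= s < t.-1) \sum_(0 <= k < n) slope_change s k
  <= work_ends t - work_ends 0.
Proof.
apply: (@le_trans _ _ (work_ends t.-1 - work_ends 0)).
  by rewrite -telescope_sumr //; apply: ler_sum => s _; exact: sum_abs_slope_wfunS.
case: t => //= t; rewrite lerD2r /work_ends.
by have := wfun_le_succ t (leq0n n); have := wfun_le_succ t (leqnn n); lra.
Qed.

Lemma half_switch_bound_le_phi t :
  2^-1 * (a * delta * \sum_(0 <= s < t.-1) \sum_(0 <= k < n)
            (slope_change s k / b))
  <= phi nrm theta delta c t.
Proof.
have theta_gt0 : 0 < theta by have := Htheta; lra.
have [a_gt0 b_gt] := (nrm1_gt0, b_gt0).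
under eq_bigr do rewrite -mulr_suml; rewrite -mulr_suml.
set S := \sum_(0 <= s < t.-1) _.
have -> : a * delta * (S / b) = S / theta.
  by rewrite /b; field; rewrite !gt_eqF.
have -> : phi nrm theta delta c t = (work_ends t - work_ends 0) / theta / 2.
  by rewrite phiE /work_ends !wfun0 // /b; field; rewrite gt_eqF.
rewrite mulrC ler_pM2r ?invr_gt0 // ler_pM2r ?invr_gt0 //.
exact: sum_abs_slope_wfun_le_ends.
Qed.

Lemma integral_SC_le t :
  (\int[@lebesgue_measure R]_(r in @unif_dom R) (SC nrm theta delta c r t)%:E <=
   (a * delta * \sum_(0 <= s < t.-1) \sum_(0 <= k < n)
      (slope_change s k / b))%:E)%E.
Proof.
have ad_ge0 : 0 <= a * delta by rewrite mulr_ge0 ?ltW ?nrm1_gt0.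
have mD : measurable (@unif_dom R) by exact: measurable_itv.
pose indics (r : R) : R := \sum_(0 <= s < t.-1) \sum_(0 <= k < n) \1_[set` switch_itv s k] r.
(* [SC] is not known to be measurable in [r], hence the comparison through simple functions. *)
apply: (@le_trans _ _
  (\int[@lebesgue_measure R]_(r in @unif_dom R) (a * delta * indics r)%:E)%E).
  apply: ge0_le_integral_nonmeasurable => r.
    move=> _; rewrite lee_fin /SC sumr_ge0 // => i _.
    by rewrite nrm_state mulr_ge0 ?normr_ge0.
  by rewrite /unif_dom /= in_itv /= => /andP[r_gt _]; rewrite lee_fin SC_le_switch_indic.
rewrite integral_scaled_sum_indic //.
rewrite [X in (_ <= X)%E]EFinM; apply: lee_wpmul2l; first by rewrite lee_fin.
rewrite -sumEFin; apply: lee_sum => s _; rewrite -sumEFin; apply: lee_sum => k _.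
by rewrite -switch_itv_measure; apply: measureIl.
Qed.

End DRBG.

Theorem lemma10 (R : realType) (nrm : R -> R) (theta delta : R) (n : nat)
    (c : nat -> 'I_n.+1 -> R)
    (Hnrm : is_norm nrm) (Htheta : 1 <= theta) (Hdelta : 0 < delta)
    (Hc_nonneg : forall t k, 0 <= c t k)
    (Hc_convex : forall t, exists g : R -> R,
        convex_fun g /\ forall k, c t k = g (state delta k))
    (t : nat) :
  (expected_SC nrm theta delta c t <= (phi nrm theta delta c t)%:E)%E.
Proof.
rewrite /expected_SC.
apply: le_trans (lee_wpmul2l _ (integral_SC_le Hnrm Htheta Hdelta Hc_convex t)) _.
  by rewrite lee_fin invr_ge0.
by rewrite -EFinM lee_fin half_switch_bound_le_phi.
Qed.
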